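(* Let $p$ be an odd prime and let $J$ be a finite family of $3p-3$ lattice points in $\mathbb{Z}^2$ (repetitions allowed). Then \[ 1-(p-1,J)-(p,J)+(2p-1,J)+(2p,J)\equiv 0 \pmod p. \]
   Context: For a finite family $X$ of lattice points in $\mathbb{Z}^2$ (points may repeat; subsets are subfamilies, i.e. subsets of the index set) and an integer $n\ge 0$, $(n,X)$ denotes the number of $n$-element subfamilies of $X$ whose coordinatewise sum is congruent to $(0,0)$ modulo $p$. *)

From mathcomp Require Import all_boot all_order all_algebra.
Set Implicit Arguments. Unset Strict Implicit. Unset Printing Implicit Defensive.
Import GRing.Theory Num.Theory.
Local Open Scope ring_scope.

Definition lattice_family (m : nat) := 'I_m -> int * int.

Definition zero_sum (p : nat) (m : nat) (X : lattice_family m) (S : {set 'I_m}) : bool :=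
  (((\sum_(i in S) (X i).1) %% (p%:Z))%Z == 0%Z)
  && (((\sum_(i in S) (X i).2) %% (p%:Z))%Z == 0%Z).

Definition count_zs (p n m : nat) (X : lattice_family m) : nat :=
  #|[set S : {set 'I_m} | (#|S| == n) && zero_sum p X S]|.

From mathcomp Require Import all_boot all_order all_algebra all_field ring zify.
Set Implicit Arguments. Unset Strict Implicit. Unset Printing Implicit Defensive.
Import GRing.Theory Num.Theory.
Local Open Scope ring_scope.

(* By Fermat's little theorem, over F_p the indicator that a subfamily S has zero sum is
   (1 - A^(p-1)) (1 - B^(p-1)), where A and B are the coordinate sums of S, and for
   |S| <= 3p - 3 the weight (-1)^|S| ((|S| + 1)^(p-1) - |S|^(p-1)) equals +1, -1, -1, +1, +1
   at |S| = 0, p - 1, p, 2p - 1, 2p and vanishes otherwise.  Summing the product over all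
   subfamilies thus yields the left-hand side modulo p.  But this product is a polynomial of
   degree 3p - 4 < |J| in subfamily sums, and an alternating sum over all subsets of fewer
   than |J| such sums multiplied together is zero: after expansion each term only involves a
   proper subset of the indices, and the signs of the subsets containing it cancel. *)

Lemma sum_signr_card_supset (R : pzRingType) (I : finType) (A : {set I}) :
  A != [set: I] -> \sum_(S : {set I} | A \subset S) (-1) ^+ #|S| = 0 :> R.
Proof.
move=> AnT; have [i0 Ai0] : exists i0, i0 \notin A.
  case: (pickP [pred i | i \notin A]) => [i0 Ai0 | allA]; first by exists i0.
  by case/eqP: AnT; apply/setP => i; rewrite inE; apply/negbFE/allA.
pose toggle (S : {set I}) := if i0 \in S then S :\ i0 else i0 |: S.
have toggleK : involutive toggle.
  move=> S; rewrite /toggle; have [S_i0 | S_ni0] := boolP (i0 \in S).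
    by rewrite in_setD1 eqxx /= setD1K.
  by rewrite setU11 setU1K.
have in_toggle S : (i0 \in toggle S) = (i0 \notin S).
  by rewrite /toggle; case: ifP => S_i0; rewrite !inE ?eqxx ?S_i0.
have sub_toggle S : (A \subset toggle S) = (A \subset S).
  rewrite /toggle; case: ifP => S_i0; first by rewrite subsetD1 Ai0 andbT.
  by rewrite -[in RHS](setU1K (negbT S_i0)) subsetD1 Ai0 andbT.
have sign_toggle S : (-1) ^+ #|toggle S| = - (-1) ^+ #|S| :> R.
  rewrite /toggle; case: ifP => S_i0; last by rewrite cardsU1 S_i0 exprS mulN1r.
  by rewrite [in RHS](cardsD1 i0 S) S_i0 exprS mulN1r opprK.
rewrite (bigID (fun S : {set I} => i0 \in S)) /=.
rewrite [X in _ + X](reindex_inj (inv_inj toggleK)) /=.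
under [X in _ + X]eq_bigl => S do rewrite in_toggle negbK sub_toggle.
by under [X in _ + X]eq_bigr => S _ do rewrite sign_toggle; rewrite sumrN addrN.
Qed.

Lemma sum_signr_card_prod (R : comPzRingType) (I : finType) d (a : 'I_d -> I -> R) :
  (d < #|I|)%N ->
  \sum_(S : {set I}) (-1) ^+ #|S| * \prod_(k < d) \sum_(i in S) a k i = 0.
Proof.
move=> ltdI.
have expand (S : {set I}) : \prod_(k < d) \sum_(i in S) a k i = \sum_(g : {ffun 'I_d -> I})
    (if [set g k | k in 'I_d] \subset S then \prod_k a k (g k) else 0).
  rewrite bigA_distr_big big_mkcond /=; apply: eq_bigr => g _.
  suff -> : (g \in ffun_on (mem S)) = ([set g k | k in 'I_d] \subset S) by [].
  apply/ffun_onP/subsetP => [gS _ /imsetP[k _ ->] | gS k]; first exact: gS.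
  by apply: gS; apply: imset_f.
under eq_bigr => S _ do rewrite expand mulr_sumr.
rewrite exchange_big /=; apply: big1 => g _.
under eq_bigr => S _ do rewrite (fun_if (GRing.mul _)) mulr0.
rewrite -big_mkcond -mulr_suml sum_signr_card_supset ?mul0r //.
apply: contraTneq ltdI => imT; rewrite -leqNgt -cardsT -imT.
by rewrite (leq_trans (leq_imset_card _ _)) ?card_ord.
Qed.

Lemma sum_signr_card_prod_seq (R : comPzRingType) (I : finType) (s : seq (I -> R)) :
  (size s < #|I|)%N ->
  \sum_(S : {set I}) (-1) ^+ #|S| * \prod_(f <- s) \sum_(i in S) f i = 0.
Proof.
move=> ltsI; rewrite -[RHS](sum_signr_card_prod (fun k => nth (fun=> 0) s k) ltsI).
by apply: eq_bigr => S _; rewrite (big_nth (fun=> 0)) big_mkord.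
Qed.

Lemma sum_signr_card_monomial (R : comPzRingType) (I : finType) (a b c : I -> R) u v w :
  (u + v + w < #|I|)%N ->
  \sum_(S : {set I}) (-1) ^+ #|S| * ((\sum_(i in S) a i) ^+ u *
      (\sum_(i in S) b i) ^+ v * (\sum_(i in S) c i) ^+ w) = 0.
Proof.
move=> ltI; rewrite -[RHS](@sum_signr_card_prod_seq _ _ (nseq u a ++ nseq v b ++ nseq w c)).
  by apply: eq_bigr => S _; rewrite !big_cat !big_nseq !iter_mulr_1 /= !mulrA.
by rewrite !size_cat !size_nseq addnA.
Qed.

Lemma sum_signr_card_low_degree (R : comPzRingType) (I : finType) (a b c : I -> R) n :
  (3 * n <= #|I|)%N ->
  \sum_(S : {set I}) (-1) ^+ #|S| *
    ((1 - (\sum_(i in S) a i) ^+ n) * (1 - (\sum_(i in S) b i) ^+ n) *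
     ((\sum_(i in S) c i + 1) ^+ n - (\sum_(i in S) c i) ^+ n)) = 0.
Proof.
case: n => [_ | m le3mI]; first by apply: big1 => S _; rewrite !expr0 subrr !mul0r mulr0.
set n := m.+1.
pose mono (S : {set I}) u v w := (-1) ^+ #|S| * ((\sum_(i in S) a i) ^+ u *
      (\sum_(i in S) b i) ^+ v * (\sum_(i in S) c i) ^+ w) : R.
have expand (S : {set I}) : (-1) ^+ #|S| * ((1 - (\sum_(i in S) a i) ^+ n) *
      (1 - (\sum_(i in S) b i) ^+ n) *
      ((\sum_(i in S) c i + 1) ^+ n - (\sum_(i in S) c i) ^+ n)) =
    \sum_(j < n) (mono S 0 0 j - mono S n 0 j - mono S 0 n j + mono S n n j) *+ 'C(n, j).
  rewrite exprD1n big_ord_recr /= binn mulr1n addrK !mulr_sumr.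
  by apply: eq_bigr => j _; rewrite /mono !expr0; ring.
under eq_bigr => S _ do rewrite expand.
rewrite exchange_big /=; apply: big1 => j _; have ltjn := ltn_ord j.
rewrite sumrMnl !big_split /= !sumrN.
rewrite !sum_signr_card_monomial ?subrr ?addr0 ?mul0rn //.
all: by rewrite /n in ltjn *; lia.
Qed.

Lemma Fp_indicator_eq0 p (x : 'F_p) : prime p -> 1 - x ^+ (p - 1) = (x == 0)%:R.
Proof.
move=> pp; have lt0p1 : (0 < p - 1)%N by have := prime_gt1 pp; lia.
have [-> | x_neq0] := eqVneq x 0; first by rewrite expr0n eqn0Ngt lt0p1 subr0.
apply/eqP; rewrite subr_eq0 eq_sym; apply/eqP/(mulfI x_neq0).
by rewrite -exprS subn1 prednK ?prime_gt0 // mulr1 -{2}(expf_card x) card_Fp.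
Qed.

Lemma signr_dvdn (R : pzRingType) p k : odd p -> (k < 3 * p)%N ->
  (-1) ^+ k * (p %| k)%N%:R = (k == 0)%:R - (k == p)%:R + (k == 2 * p)%:R :> R.
Proof.
move=> op ltk3p; have p_gt0 : (0 < p)%N by case: p op ltk3p.
have [/dvdnP[q def_k] | ndvd] := boolP (p %| k)%N; last first.
  have neq m : (p %| m)%N -> (k == m) = false by move=> dvd_m; apply: contraNF ndvd => /eqP->.
  by rewrite !neq ?dvdn0 ?dvdnn ?dvdn_mull // mulr0 subrr addr0.
have : (q < 3)%N by rewrite -(ltn_pmul2r p_gt0) -def_k.
rewrite {}def_k eqn_pmul2r //.
have -> : (q * p == 0)%N = (q == 0) by rewrite muln_eq0 (gtn_eqF p_gt0) orbF.
have -> : (q * p == p)%N = (q == 1) by rewrite -{2}[p]mul1n eqn_pmul2r.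
rewrite -signr_odd oddM op andbT mulr1.
by case: q => [|[|[|]]] //= _; rewrite ?subr0 ?addr0 ?sub0r ?subrr ?add0r.
Qed.

(* By Fermat, [1 - k^(p-1)] is the indicator of [p %| k]. *)
Lemma Fp_signed_weight p k : prime p -> odd p -> (k <= 3 * p - 3)%N ->
  (-1) ^+ k * (k.+1%:R ^+ (p - 1) - k%:R ^+ (p - 1)) =
    (k == 0)%:R - (k == p - 1)%N%:R - (k == p)%:R + (k == 2 * p - 1)%N%:R
    + (k == 2 * p)%N%:R :> 'F_p.
Proof.
move=> pp op lek; have p_gt1 := prime_gt1 pp.
have -> x y : x - y = (1 - y) - (1 - x) :> 'F_p by ring.
rewrite !Fp_indicator_eq0 // -!(dvdn_pcharf (pchar_Fp pp)) mulrBr signr_dvdn //; last by lia.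
have -> : (-1) ^+ k = - (-1) ^+ k.+1 :> 'F_p by rewrite exprS mulN1r opprK.
rewrite mulNr signr_dvdn //; last by lia.
have -> : (k.+1 == p) = (k == p - 1)%N by apply/eqP/eqP; lia.
have -> : (k.+1 == 2 * p)%N = (k == 2 * p - 1)%N by apply/eqP/eqP; lia.
rewrite /=; ring.
Qed.

Lemma zero_sumE p m (X : lattice_family m) (S : {set 'I_m}) : prime p ->
  zero_sum p X S = (\sum_(i in S) ((X i).1)%:~R == 0 :> 'F_p)
                && (\sum_(i in S) ((X i).2)%:~R == 0 :> 'F_p).
Proof.
move=> pp; rewrite /zero_sum -!rmorph_sum -!(dvdz_pcharf (pchar_Fp pp)).
by rewrite !(sameP eqP dvdz_mod0P).
Qed.

Lemma count_zs0 p m (X : lattice_family m) : count_zs p 0 X = 1%N.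
Proof.
rewrite /count_zs (_ : [set S | _] = [set set0]) ?cards1 //.
apply/setP => S; rewrite !inE cards_eq0.
by case: eqP => [-> | //]; rewrite /zero_sum !big_set0 mod0z eqxx.
Qed.

Lemma sum_count_zs (R : pzSemiRingType) p n m (X : lattice_family m) :
  \sum_(S : {set 'I_m}) ((#|S| == n) && zero_sum p X S)%:R = (count_zs p n X)%:R :> R.
Proof.
rewrite /count_zs -sum1_card natr_sum [RHS]big_mkcond.
by apply: eq_bigr => S _; rewrite inE; case: (_ && _).
Qed.

Lemma count_zs_alternating_Fp p (J : lattice_family (3 * p - 3)) : prime p -> odd p ->
  1 - (count_zs p (p - 1) J)%:R - (count_zs p p J)%:R
    + (count_zs p (2 * p - 1) J)%:R + (count_zs p (2 * p) J)%:R = 0 :> 'F_p.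
Proof.
move=> pp op.
pose a i := ((J i).1)%:~R : 'F_p; pose b i := ((J i).2)%:~R : 'F_p.
have summandE (S : {set 'I_(3 * p - 3)}) : (-1) ^+ #|S| *
    ((1 - (\sum_(i in S) a i) ^+ (p - 1)) * (1 - (\sum_(i in S) b i) ^+ (p - 1)) *
     ((\sum_(i in S) 1 + 1) ^+ (p - 1) - (\sum_(i in S) 1) ^+ (p - 1))) =
    ((#|S| == 0) && zero_sum p J S)%:R - ((#|S| == p - 1)%N && zero_sum p J S)%:R
    - ((#|S| == p) && zero_sum p J S)%:R + ((#|S| == 2 * p - 1)%N && zero_sum p J S)%:R
    + ((#|S| == 2 * p)%N && zero_sum p J S)%:R.
  rewrite sumr_const -mulrSr mulrCA Fp_signed_weight //; last first.
    by rewrite -[X in (_ <= X)%N](card_ord (3 * p - 3)) max_card.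
  rewrite !Fp_indicator_eq0 // -natrM mulnb -zero_sumE //.
  by case: (zero_sum p J S); rewrite ?andbT ?andbF ?mul1r ?mul0r ?subrr ?addr0.
have := @sum_signr_card_low_degree _ _ a b (fun _ => 1) (p - 1).
rewrite card_ord mulnBr muln1 => /(_ (leqnn _)).
under eq_bigr => S _ do rewrite summandE.
by rewrite !big_split /= !sumrN !sum_count_zs count_zs0.
Qed.

Theorem corollary1 (p : nat) (J : lattice_family (3 * p - 3)%N) :
  prime p -> odd p ->
  (1 - (count_zs p (p - 1)%N J)%:Z - (count_zs p p J)%:Z
     + (count_zs p (2 * p - 1)%N J)%:Z + (count_zs p (2 * p)%N J)%:Z
   = 0 %[mod p%:Z])%Z.
Proof.
move=> pp op; rewrite mod0z; apply/dvdz_mod0P.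
rewrite (dvdz_pcharf (pchar_Fp pp)) !rmorphD !rmorphN rmorph1 /= -!pmulrn.
exact/eqP/count_zs_alternating_Fp.
Qed.
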